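(* Let $M$ be a finite monoid and $k$ a field. If there exist two irreducible elements $p,q\in M$ that are not associates, then the monoid algebra $kM$ is of infinite representation type.
   Context: A non-unit $p$ in a monoid $M$ is irreducible if whenever $p=ab$ with $a,b\in M$, then $a$ is a unit or $b$ is a unit. Two elements $a,b\in M$ are associates if there exist units $u,v\in M$ with $a=ubv$. A finite-dimensional $k$-algebra is of infinite representation type if it has infinitely many isomorphism classes of finite-dimensional indecomposable modules. *)

From HB Require Import structures.
From mathcomp Require Import all_boot all_order all_algebra.
Set Implicit Arguments. Unset Strict Implicit. Unset Printing Implicit Defensive.
Import GRing.Theory.
Local Open Scope ring_scope.

Definition is_monoid (M : Type) (mul : M -> M -> M) (one : M) : Prop :=
  [/\ associative mul, left_id one mul & right_id one mul].

Definition munit (M : Type) (mul : M -> M -> M) (one : M) (u : M) : Prop :=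
  exists v, mul u v = one /\ mul v u = one.

Definition mirreducible (M : Type) (mul : M -> M -> M) (one : M) (p : M) : Prop :=
  ~ munit mul one p /\
  forall a b, p = mul a b -> munit mul one a \/ munit mul one b.

Definition massociates (M : Type) (mul : M -> M -> M) (one : M) (a b : M) : Prop :=
  exists u v, munit mul one u /\ munit mul one v /\ a = mul (mul u b) v.

(* Finite-dimensional (left) modules over the monoid algebra kM, given as
   matrix representations of M on row vectors k^n: a . v := v *m rho a.
   For this to be a LEFT action, rho must be an anti-morphism:
   rho (a b) = rho b *m rho a, and rho 1 = 1. *)
Definition is_mrepr (k : fieldType) (M : Type) (mul : M -> M -> M) (one : M)
  (n : nat) (rho : M -> 'M[k]_n) : Prop :=
  rho one = 1%:M /\ forall a b, rho (mul a b) = rho b *m rho a.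

Record mrepr (k : fieldType) (M : Type) (mul : M -> M -> M) (one : M) := MRepr {
  mr_dim : nat;
  mr_map : M -> 'M[k]_mr_dim;
  mr_ok : is_mrepr mul one mr_map }.

Definition mrepr_iso (k : fieldType) (M : Type) (mul : M -> M -> M) (one : M)
  (r s : mrepr k mul one) : Prop :=
  exists (P : 'M[k]_(mr_dim r, mr_dim s)),
    row_free P /\ row_full P /\ forall a, mr_map r a *m P = P *m mr_map s a.

Definition mstable (k : fieldType) (M : Type) (mul : M -> M -> M) (one : M)
  (r : mrepr k mul one) (U : 'M[k]_(mr_dim r)) : Prop :=
  forall a, (U *m mr_map r a <= U)%MS.

Definition mindecomposable (k : fieldType) (M : Type) (mul : M -> M -> M) (one : M)
  (r : mrepr k mul one) : Prop :=
  (0 < mr_dim r)%N /\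
  (forall U W : 'M[k]_(mr_dim r), mstable U -> mstable W ->
    (U :&: W == (0 : 'M[k]_(mr_dim r)))%MS -> (U + W == (1%:M : 'M[k]_(mr_dim r)))%MS ->
    (U == (0 : 'M[k]_(mr_dim r)))%MS \/ (W == (0 : 'M[k]_(mr_dim r)))%MS).

(* Infinite representation type: infinitely many isomorphism classes of
   finite-dimensional indecomposable modules, i.e. any finite list of them
   misses some indecomposable module up to isomorphism. *)
Definition infinite_rep_type (k : fieldType) (M : Type) (mul : M -> M -> M) (one : M) : Prop :=
  forall s : seq (mrepr k mul one),
    exists r : mrepr k mul one,
      mindecomposable r /\ forall i, (i < size s)%N -> ~ mrepr_iso r (nth r s i).

From mathcomp Require Import all_boot all_order all_algebra.
From mathcomp Require Import zify.
Set Implicit Arguments. Unset Strict Implicit. Unset Printing Implicit Defensive.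
Import GRing.Theory.

(* Units of M act on k^n (+) k^n as the identity, associates of p by
   X = [[0, 1], [0, 0]], associates of q by Y = [[0, N], [0, 0]] with N the
   nilpotent shift, and all other elements by 0.  This is a representation
   because all products of X and Y vanish and a product of two non-units is
   neither a unit nor associate to an irreducible element.  It is
   indecomposable: in a decomposition U (+) W, the b such that (0, b) lies in
   a given summand form an N-stable subspace, so if both summands were nonzero
   both would contain (0, e_0), the socle of N.  Letting n grow yields
   indecomposable modules of unbounded dimension. *)

Section FiniteMonoid.
Variables (M : finType) (mul : M -> M -> M) (one : M).
Local Notation unit := (munit mul one).
Local Notation assoc := (massociates mul one).

Definition munitb x := [exists v, (mul x v == one) && (mul v x == one)].

Lemma munitP x : reflect (unit x) (munitb x).
Proof.
apply: (iffP existsP) => [[v /andP[/eqP xv /eqP vx]] | [v [xv vx]]].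
  by exists v.
by exists v; rewrite xv vx !eqxx.
Qed.

Definition massocb a b :=
  [exists u, exists v, [&& munitb u, munitb v & a == mul (mul u b) v]].

Lemma massocP a b : reflect (assoc a b) (massocb a b).
Proof.
apply: (iffP existsP) => [[u /existsP[v /and3P[/munitP uu /munitP uv /eqP e]]] |].
  by exists u, v.
move=> [u [v [uu [uv e]]]]; exists u; apply/existsP; exists v.
by apply/and3P; split; [exact/munitP | exact/munitP | exact/eqP].
Qed.

Hypothesis monoidM : is_monoid mul one.

Let mulA : associative mul. Proof. by case: monoidM. Qed.
Let mul1m : left_id one mul. Proof. by case: monoidM. Qed.
Let mulm1 : right_id one mul. Proof. by case: monoidM. Qed.

Lemma munit1 : unit one.
Proof. by exists one; rewrite mul1m. Qed.

Lemma munitM u v : unit u -> unit v -> unit (mul u v).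
Proof.
move=> [u' [uu' u'u]] [v' [vv' v'v]]; exists (mul v' u'); split.
  by rewrite -mulA (mulA v) vv' mul1m.
by rewrite -mulA (mulA u') u'u mul1m.
Qed.

(* In a finite monoid a right inverse is two-sided: [mul r] is injective, hence onto. *)
Lemma munit_of_mul_eq1 a r : mul a r = one -> unit a.
Proof.
move=> ar1.
have /injF_bij[g rg gr] : injective (mul r).
  by move=> x y e; rewrite -(mul1m x) -(mul1m y) -ar1 -!mulA e.
have ag : a = g one by rewrite -(mulm1 a) -{1}(gr one) mulA ar1 mul1m.
by exists r; split=> //; rewrite ag gr.
Qed.

Lemma munitMP a b : unit (mul a b) <-> unit a /\ unit b.
Proof.
split=> [[c [abc cab]] | [ua ub]]; last exact: munitM.
have ua : unit a by apply: (@munit_of_mul_eq1 a (mul b c)); rewrite mulA.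
have [a' [aa' a'a]] := ua.
have -> : b = mul a' (mul a b) by rewrite mulA a'a mul1m.
by split=> //; apply: munitM; [exists a | exists c].
Qed.

Lemma massoc_refl a : assoc a a.
Proof. by have u1 := munit1; exists one, one; rewrite mul1m mulm1. Qed.

Lemma massoc_sym a b : assoc a b -> assoc b a.
Proof.
move=> [x [y [[x' [xx' x'x]] [[y' [yy' y'y]] ->]]]].
exists x', y'; split; [by exists x | split; first by exists y].
by rewrite !mulA x'x mul1m -mulA yy' mulm1.
Qed.

Lemma massoc_mull u b c : unit u -> assoc (mul u b) c <-> assoc b c.
Proof.
move=> [u' [uu' u'u]]; split=> [[x [y [ux [uy e]]]] | [x [y [ux [uy ->]]]]].
  exists (mul u' x), y; split; first by apply: munitM => //; exists u.
  by split=> //; rewrite -(mul1m b) -u'u -mulA e !mulA.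
exists (mul u x), y; split; first by apply: munitM => //; exists u'.
by split=> //; rewrite !mulA.
Qed.

Lemma massoc_mulr u b c : unit u -> assoc (mul b u) c <-> assoc b c.
Proof.
move=> [u' [uu' u'u]]; split=> [[x [y [ux [uy e]]]] | [x [y [ux [uy ->]]]]].
  exists x, (mul y u'); split=> //; split; first by apply: munitM => //; exists u.
  by rewrite -(mulm1 b) -uu' mulA e !mulA.
exists x, (mul y u); split=> //; split; first by apply: munitM => //; exists u'.
by rewrite !mulA.
Qed.

Lemma mirreducible_not_massocM p a b : mirreducible mul one p ->
  ~ unit a -> ~ unit b -> ~ assoc (mul a b) p.
Proof.
move=> [_ irr_p] na nb [x [y [[x' [xx' x'x]] [[y' [yy' y'y]] e]]]].
have : p = mul (mul x' a) (mul b y').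
  by rewrite mulA -(mulA x' a b) e !mulA x'x mul1m -mulA yy' mulm1.
case/irr_p => [ux'a | uby'].
  apply: na; have -> : a = mul x (mul x' a) by rewrite mulA xx' mul1m.
  by apply: munitM => //; exists x'.
apply: nb; have -> : b = mul (mul b y') y by rewrite -mulA y'y mulm1.
by apply: munitM => //; exists y'.
Qed.

End FiniteMonoid.

Local Open Scope ring_scope.

Section SquareZeroRepresentation.
Variables (M : finType) (mul : M -> M -> M) (one : M) (k : fieldType) (d : nat).
Variables (p q : M) (A B : 'M[k]_d).
Hypothesis monoidM : is_monoid mul one.
Hypotheses (irr_p : mirreducible mul one p) (irr_q : mirreducible mul one q).
Hypotheses (AA0 : A *m A = 0) (AB0 : A *m B = 0) (BA0 : B *m A = 0) (BB0 : B *m B = 0).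
Local Notation unit := (munit mul one).
Local Notation assoc := (massociates mul one).

Definition sqzero_map x : 'M[k]_d :=
  if munitb mul one x then 1%:M
  else if massocb mul one x p then A
  else if massocb mul one x q then B
  else 0.

Lemma sqzero_map_unit x : unit x -> sqzero_map x = 1%:M.
Proof. by rewrite /sqzero_map; case: munitP. Qed.

Lemma sqzero_map_nonunit x : ~ unit x -> sqzero_map x \in [:: A; B; 0].
Proof.
rewrite /sqzero_map !inE; case: munitP => // _.
by case: (massocP mul one x p); case: (massocP mul one x q); rewrite eqxx ?orbT.
Qed.

Lemma sqzero_map_eq x y : (unit x <-> unit y) ->
  (assoc x p <-> assoc y p) -> (assoc x q <-> assoc y q) -> sqzero_map x = sqzero_map y.
Proof.
move=> xy xyp xyq; rewrite /sqzero_map.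
rewrite (sameP (equivP (munitP mul one x) xy) (munitP mul one y)).
by rewrite (sameP (equivP (massocP mul one x p) xyp) (massocP mul one y p))
           (sameP (equivP (massocP mul one x q) xyq) (massocP mul one y q)).
Qed.

Lemma sqzero_map_mull u x : unit u -> sqzero_map (mul u x) = sqzero_map x.
Proof.
move=> uu; apply: sqzero_map_eq; try exact: massoc_mull.
by split=> [/(munitMP monoidM)[] | ux] //; exact: munitM.
Qed.

Lemma sqzero_map_mulr u x : unit u -> sqzero_map (mul x u) = sqzero_map x.
Proof.
move=> uu; apply: sqzero_map_eq; try exact: massoc_mulr.
by split=> [/(munitMP monoidM)[] | ux] //; exact: munitM.
Qed.

Lemma sqzero_map_nonunitM a b : ~ unit a -> ~ unit b -> sqzero_map (mul a b) = 0.
Proof.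
move=> na nb; rewrite /sqzero_map.
case: munitP => [/(munitMP monoidM)[] // |_].
case: massocP => [/(mirreducible_not_massocM monoidM irr_p na nb) // | _].
by case: massocP => [/(mirreducible_not_massocM monoidM irr_q na nb) | _].
Qed.

Lemma sqzero_map_is_mrepr : is_mrepr mul one sqzero_map.
Proof.
split=> [|a b]; first exact/sqzero_map_unit/munit1.
have [ua|na] := munitP mul one a.
  by rewrite sqzero_map_mull // (sqzero_map_unit ua) mulmx1.
have [ub|nb] := munitP mul one b.
  by rewrite sqzero_map_mulr // (sqzero_map_unit ub) mul1mx.
rewrite sqzero_map_nonunitM //.
move: (sqzero_map_nonunit nb) (sqzero_map_nonunit na); rewrite !inE.
by do 2!case/or3P=> /eqP->; rewrite ?mulmx0 ?mul0mx ?AA0 ?AB0 ?BA0 ?BB0.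
Qed.

Definition sqzero_repr : mrepr k mul one := MRepr sqzero_map_is_mrepr.

Lemma sqzero_map_p : sqzero_map p = A.
Proof.
have [np _] := irr_p.
rewrite /sqzero_map; case: munitP => // _.
by case: massocP => // /(_ (massoc_refl monoidM p)).
Qed.

Lemma sqzero_map_q : ~ assoc p q -> sqzero_map q = B.
Proof.
move=> npq; have [nq _] := irr_q.
rewrite /sqzero_map; case: munitP => // _.
case: massocP => [/(massoc_sym monoidM) // | _].
by case: massocP => // /(_ (massoc_refl monoidM q)).
Qed.

End SquareZeroRepresentation.

Lemma mul_block_upper0 (k : fieldType) (n1 n2 : nat) (C D : 'M[k]_(n1, n2)) :
  block_mx 0 C 0 0 *m block_mx 0 D 0 0 = 0 :> 'M_(n1 + n2).
Proof. by rewrite mulmx_block !mulmx0 !mul0mx !addr0 block_mx0. Qed.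

Lemma stablemx_mul_submx (k : fieldType) (m1 n : nat) (A : 'M[k]_(m1, n))
    (Z : 'M_n) (v : 'rV_n) :
  stablemx A Z -> (v <= A)%MS -> (v *m Z <= A)%MS.
Proof. by move=> AZ vA; apply: submx_trans AZ; exact: submxMr. Qed.

Section ShiftModule.
Variables (k : fieldType) (m : nat).
Local Notation n := m.+1.
Local Notation e0 := (delta_mx 0 ord0 : 'rV[k]_n).

Definition shift : 'M[k]_n := \matrix_(i, j) (i == j.+1 :> nat)%:R.

Lemma shift_coef (b : 'rV[k]_n) (j : 'I_n) :
  (b *m shift) 0 j = if (j.+1 < n)%N then b 0 (inord j.+1) else 0.
Proof.
rewrite mxE; case: ifP => jn.
  rewrite (bigD1 (inord j.+1)) //= mxE inordK // eqxx mulr1 big1 ?addr0 // => i ij.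
  rewrite mxE; case: eqP => [eij | _]; last by rewrite mulr0.
  by case/eqP: ij; apply: val_inj; rewrite /= inordK // -eij.
apply: big1 => i _; rewrite mxE; case: eqP => [eij | _]; last by rewrite mulr0.
by move: (ltn_ord i); rewrite eij jn.
Qed.

Lemma shiftX_coef (b : 'rV[k]_n) t (j : 'I_n) :
  (b *m shift ^+ t) 0 j = if (j + t < n)%N then b 0 (inord (j + t)) else 0.
Proof.
elim: t j => [|t IH] j; first by rewrite expr0 mulmx1 addn0 ltn_ord inord_val.
rewrite exprSr mulmxA shift_coef; case: ifP => jn.
  by rewrite IH inordK // addSnnS.
by case: ifP => //; lia.
Qed.

(* [t] is the index of the last nonzero coefficient of [b]. *)
Lemma shiftX_last (b : 'rV[k]_n) : b != 0 ->
  exists2 t : 'I_n, b 0 t != 0 & b *m shift ^+ t = b 0 t *: e0.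
Proof.
move=> nb; have [i0 bi0] : exists i, b 0 i != 0.
  apply/existsP; apply: contraR nb => /existsPn b0.
  by apply/eqP/rowP => i; rewrite mxE; apply/eqP/negPn/b0.
case: (@arg_maxnP _ i0 (fun i => b 0 i != 0) val bi0) => t bt tmax.
exists t => //; apply/rowP => j.
rewrite shiftX_coef !mxE eqxx /=; case: (posnP j) => [j0 | jpos].
  by rewrite j0 add0n ltn_ord inord_val (_ : j = ord0) ?eqxx ?mulr1 //; apply: val_inj.
rewrite (_ : j == ord0 = false) ?mulr0; last by apply/eqP => j0; rewrite j0 in jpos.
case: ifP => // jtn; apply/eqP; apply: contraT => /tmax.
by rewrite /geq /= inordK //; lia.
Qed.

Definition Xmx : 'M[k]_(n + n) := block_mx 0 1%:M 0 0.
Definition Ymx : 'M[k]_(n + n) := block_mx 0 shift 0 0.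

Lemma mul_row_Xmx (a b : 'rV[k]_n) : row_mx a b *m Xmx = row_mx 0 a.
Proof. by rewrite mul_row_block !mulmx0 mulmx1 !addr0. Qed.

Lemma mul_row_Ymx (a b : 'rV[k]_n) : row_mx a b *m Ymx = row_mx 0 (a *m shift).
Proof. by rewrite mul_row_block !mulmx0 !addr0. Qed.

Lemma exists_row_mx0_submx (m1 : nat) (A : 'M[k]_(m1, n + n)) (v : 'rV[k]_(n + n)) :
  stablemx A Xmx -> (v <= A)%MS -> v != 0 ->
  exists2 b : 'rV_n, b != 0 & (row_mx 0 b <= A)%MS.
Proof.
move=> AX; rewrite -(hsubmxK v) => vA nv.
have [a0 | na] := eqVneq (lsubmx v) 0.
  by exists (rsubmx v); [move: nv; rewrite a0 row_mx_eq0 eqxx | rewrite -a0].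
by exists (lsubmx v); rewrite // -(mul_row_Xmx _ (rsubmx v)) stablemx_mul_submx.
Qed.

Section Summand.
Variables (A B : 'M[k]_(n + n)).
Hypotheses (AX : stablemx A Xmx) (AY : stablemx A Ymx) (BX : stablemx B Xmx).
Hypothesis AB0 : (A :&: B <= (0 : 'M[k]_(n + n)))%MS.
Hypothesis AB1 : (1%:M <= (A + B : 'M[k]_(n + n)))%MS.

(* Write [row_mx b 0 = u + w] along [A + B]; applying [Xmx] puts [w *m Xmx]
   in both summands, so [row_mx 0 b = u *m Xmx] and [b] is the left half of [u]. *)
Lemma row_mx0_shift_submx (b : 'rV[k]_n) :
  (row_mx 0 b <= A)%MS -> (row_mx 0 (b *m shift) <= A)%MS.
Proof.
move=> bA; have /sub_addsmxP[[x y] /= e] := submx_trans (submx1 (row_mx b 0)) AB1.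
have wX0 : y *m B *m Xmx = 0.
  have wXB : (y *m B *m Xmx <= B)%MS by rewrite stablemx_mul_submx ?submxMl.
  apply/eqP; rewrite -submx0; apply: submx_trans AB0; rewrite sub_capmx wXB andbT.
  have -> : y *m B *m Xmx = row_mx 0 b - x *m A *m Xmx.
    by rewrite -(mul_row_Xmx b 0) e mulmxDl addrAC subrr add0r.
  by rewrite addmx_sub // eqmx_opp stablemx_mul_submx ?submxMl.
have : row_mx 0 b = x *m A *m Xmx by rewrite -(mul_row_Xmx b 0) e mulmxDl wX0 addr0.
rewrite -[x *m A]hsubmxK mul_row_Xmx => /eq_row_mx[_ ->].
rewrite -(mul_row_Ymx _ (rsubmx (x *m A))) hsubmxK.
by apply: stablemx_mul_submx; rewrite ?submxMl.
Qed.

Lemma row_mx0_e0_submx (b : 'rV[k]_n) :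
  b != 0 -> (row_mx 0 b <= A)%MS -> (row_mx 0 e0 <= A)%MS.
Proof.
move=> nb bA; have [t bt e] := shiftX_last nb.
have : (row_mx 0 (b *m shift ^+ t) <= A)%MS.
  elim: (t : nat) => [|i IH]; first by rewrite expr0 mulmx1.
  by rewrite exprSr mulmxA; apply: row_mx0_shift_submx.
have -> : row_mx 0 (b *m shift ^+ t) = b 0 t *: row_mx 0 e0 :> 'rV_(n + n).
  by rewrite e scale_row_mx scaler0.
by rewrite eqmx_scale.
Qed.

End Summand.

Lemma Xmx_Ymx_indecomposable (U W : 'M[k]_(n + n)) :
  stablemx U Xmx -> stablemx U Ymx -> stablemx W Xmx -> stablemx W Ymx ->
  (U :&: W == (0 : 'M_(n + n)))%MS -> (U + W == (1%:M : 'M_(n + n)))%MS ->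
  (U == (0 : 'M_(n + n)))%MS \/ (W == (0 : 'M_(n + n)))%MS.
Proof.
move=> UX UY WX WY /andP[UW0 _] /andP[_ UW1].
have [-> | /rowV0Pn[u uU nu]] := eqVneq U 0; first by left; rewrite !sub0mx.
have [-> | /rowV0Pn[w wW nw]] := eqVneq W 0; first by right; rewrite !sub0mx.
have [b nb bU] := exists_row_mx0_submx UX uU nu.
have [c nc cW] := exists_row_mx0_submx WX wW nw.
have e0U := row_mx0_e0_submx UX UY WX UW0 UW1 nb bU.
have e0W : (row_mx 0 e0 <= W)%MS.
  by apply: (row_mx0_e0_submx WX WY UX _ _ nc cW); [rewrite capmxC | rewrite addsmxC].
have : (row_mx 0 e0 <= (0 : 'M_(n + n)))%MS.
  by apply: submx_trans UW0; rewrite sub_capmx e0U.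
rewrite submx0 row_mx_eq0 eqxx /= => /eqP/matrixP/(_ 0 0).
by rewrite !mxE eqxx => /eqP; rewrite oner_eq0.
Qed.

End ShiftModule.

Section ShiftRepresentation.
Variables (M : finType) (mul : M -> M -> M) (one : M) (k : fieldType) (m : nat).
Variables (p q : M).
Hypothesis monoidM : is_monoid mul one.
Hypotheses (irr_p : mirreducible mul one p) (irr_q : mirreducible mul one q).
Hypothesis npq : ~ massociates mul one p q.

Let upper0 := @mul_block_upper0 k m.+1 m.+1.

Definition shift_repr : mrepr k mul one :=
  @sqzero_repr _ _ _ _ _ p q (Xmx k m) (Ymx k m) monoidM irr_p irr_q
    (upper0 _ _) (upper0 _ _) (upper0 _ _) (upper0 _ _).

Lemma shift_repr_indecomposable : mindecomposable shift_repr.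
Proof.
split=> //= U W stU stW; apply: Xmx_Ymx_indecomposable.
- by have := stU p; rewrite /= sqzero_map_p.
- by have := stU q; rewrite /= sqzero_map_q.
- by have := stW p; rewrite /= sqzero_map_p.
- by have := stW q; rewrite /= sqzero_map_q.
Qed.

End ShiftRepresentation.

Lemma mrepr_iso_dim (k : fieldType) (M : Type) (mul : M -> M -> M) (one : M)
  (r s : mrepr k mul one) : mrepr_iso r s -> mr_dim r = mr_dim s.
Proof. by move=> [P [/eqP free_P [/eqP full_P _]]]; rewrite -free_P full_P. Qed.

Theorem corollary4 (M : finType) (mul : M -> M -> M) (one : M) (k : fieldType) :
  is_monoid mul one ->
  forall p q : M, mirreducible mul one p -> mirreducible mul one q ->
    ~ massociates mul one p q ->
    infinite_rep_type k mul one.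
Proof.
move=> monoidM p q irr_p irr_q npq s.
pose d := \max_(x <- map (@mr_dim k M mul one) s) x.
pose r := shift_repr k d monoidM irr_p irr_q.
exists r; split=> [|i lt_i iso_ri]; first exact: shift_repr_indecomposable.
have : (mr_dim (nth r s i) <= d)%N.
  rewrite -(nth_map r 0%N) //; apply: (leq_bigmax_seq (F := id)) => //.
  by rewrite mem_nth ?size_map.
by rewrite -(mrepr_iso_dim iso_ri) /=; lia.
Qed.
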